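(* Let $K_{m_1,m_2}$ be the complete bipartite graph with bipartition $(X,Y)$, $|X|=m_1$, $|Y|=m_2$, where $2\le m_1\le m_2$. If $S\subseteq X$ and $|S|\ge 2$, then $\kappa^*_{K_{m_1,m_2}}(S)=m_2$. If $S\subseteq Y$ and $|S|\ge 2$, then $\kappa^*_{K_{m_1,m_2}}(S)=m_1$.
   Context: For $S\subseteq V(G)$ with $|S|\ge 2$, an $S$-Steiner tree of $G$ is a subtree $T$ of $G$ with $S\subseteq V(T)$ all of whose leaves belong to $S$. A family of $S$-Steiner trees $T_1,\dots,T_k$ is completely independent if for all $1\le p<q\le k$: $E(T_p)\cap E(T_q)=\emptyset$, $V(T_p)\cap V(T_q)=S$, and for any two vertices $x_1,x_2\in S$ the $(x_1,x_2)$-paths in $T_p$ and in $T_q$ are internally disjoint. $\kappa^*_G(S)$ is the maximum number of trees in a completely independent family of $S$-Steiner trees in $G$. *)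

From mathcomp Require Import all_boot.
Set Implicit Arguments. Unset Strict Implicit. Unset Printing Implicit Defensive.

Section Graphs.
Variable V : finType.

(* A subgraph: a vertex set and a set of edges, each edge a 2-element set. *)
Definition subgraph := ({set V} * {set {set V}})%type.

Definition edges_ok (adj : rel V) (H : subgraph) : Prop :=
  forall e, e \in H.2 -> exists x y,
    [/\ x \in H.1, y \in H.1, x != y, adj x y & e = [set x; y]].

Definition hrel (H : subgraph) : rel V := fun u v => [set u; v] \in H.2.

Definition is_path (H : subgraph) (x y : V) (p : seq V) : Prop :=
  exists s, [/\ p = x :: s, x \in H.1, path (hrel H) x s,
               last x s = y & uniq p].

Definition connected (H : subgraph) : Prop :=
  forall x y, x \in H.1 -> y \in H.1 -> exists p, is_path H x y p.

Definition acyclic (H : subgraph) : Prop :=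
  forall c : seq V, 3 <= size c -> uniq c -> ~~ cycle (hrel H) c.

Definition is_tree (adj : rel V) (H : subgraph) : Prop :=
  [/\ edges_ok adj H, connected H & acyclic H].

Definition degree (H : subgraph) (v : V) : nat := #|[set e in H.2 | v \in e]|.

Definition leaf (H : subgraph) (v : V) : Prop := v \in H.1 /\ degree H v = 1.

Definition steiner_tree (adj : rel V) (S : {set V}) (H : subgraph) : Prop :=
  [/\ is_tree adj H, S \subset H.1 & forall v, leaf H v -> v \in S].

Definition internal (x y : V) (p : seq V) : pred V :=
  [pred v | (v \in p) && (v != x) && (v != y)].

Definition compl_indep (adj : rel V) (S : {set V}) (k : nat)
    (T : 'I_k -> subgraph) : Prop :=
  (forall i, steiner_tree adj S (T i)) /\
  forall p q : 'I_k, p < q ->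
    [/\ [disjoint (T p).2 & (T q).2],
        (T p).1 :&: (T q).1 = S &
        forall x1 x2 P Q, x1 \in S -> x2 \in S ->
          is_path (T p) x1 x2 P -> is_path (T q) x1 x2 Q ->
          [disjoint internal x1 x2 P & internal x1 x2 Q]].

Definition kappa_star_eq (adj : rel V) (S : {set V}) (k : nat) : Prop :=
  (exists T : 'I_k -> subgraph, compl_indep adj S T) /\
  forall k' (T : 'I_k' -> subgraph), compl_indep adj S T -> k' <= k.

End Graphs.

Definition Kadj (m1 m2 : nat) : rel ('I_m1 + 'I_m2)%type :=
  fun x y => match x, y with
             | inl _, inr _ => true
             | inr _, inl _ => true
             | _, _ => false
             end.

Definition Xpart (m1 m2 : nat) : {set ('I_m1 + 'I_m2)%type} :=
  [set x | if x is inl _ then true else false].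
Definition Ypart (m1 m2 : nat) : {set ('I_m1 + 'I_m2)%type} :=
  [set x | if x is inr _ then true else false].
Arguments Kadj : clear implicits.
Arguments Xpart : clear implicits.
Arguments Ypart : clear implicits.

From mathcomp Require Import all_boot.
Set Implicit Arguments. Unset Strict Implicit. Unset Printing Implicit Defensive.

(* Let A be an independent set containing S and completely joined to its
   complement. The stars with leaf set S centred at the vertices outside A are
   completely independent, because every edge of a star meets its centre, so
   the centre is the only possible internal vertex of a path in it. Conversely
   every S-Steiner tree has an edge, hence a vertex outside A, and two trees of
   a completely independent family share only vertices of S, which lie in A;
   so there are at most |V \ A| trees. In K_{m1,m2} both parts qualify. *)

Section EdgesThroughCenter.
Variables (V : finType) (e : rel V) (c : V).
Hypothesis edge_center : forall u w, e u w -> (u == c) || (w == c).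

Lemma cycle_center_small p : uniq p -> cycle e p -> size p <= 2.
Proof.
(* Rotate c to the front; the edge between the next two vertices misses c. *)
have [/rot_to[i s' rot_p] | cNp] := boolP (c \in p).
  rewrite -(rot_uniq i) -(rot_cycle i) -(size_rot i) rot_p.
  case: s' {rot_p} => [|b [|d r]] //=; rewrite !inE => /andP[/norP[cb /norP[cd _]] _].
  by case/and3P=> _ /edge_center; rewrite ![_ == c]eq_sym (negbTE cb) (negbTE cd).
case: p cNp => [|a [|b r]] //= cNp _ /andP[/edge_center].
by case/orP=> /eqP ac; rewrite -ac !inE eqxx ?orbT in cNp.
Qed.

Lemma path_center_internal x s v :
  path e x s -> uniq (x :: s) -> v \in internal x (last x s) (x :: s) -> v = c.
Proof.
rewrite inE /= => + + /andP[/andP[vp vx] vl]; move: vp vl.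
case: s => [|y [|z r]] /=; rewrite !inE ?(negbTE vx) //=.
  by move=> /eqP->; rewrite eqxx.
move=> vp vl /and3P[exy eyz pzr] /and4P[/norP[xy /norP[xz _]] /norP[yz yr] _ _].
have yc : y = c.
  apply/eqP; apply: contraNT xz => yc.
  move: (edge_center exy) (edge_center eyz); rewrite (negbTE yc) orbF /=.
  by move=> /eqP-> /eqP->.
case: r pzr yr vl vp => [|w r] /=.
  by move=> _ _ vz /orP[/eqP->//|]; rewrite (negbTE vz).
case/andP=> /edge_center; rewrite -yc eq_sym (negbTE yz) /= => /eqP->.
by rewrite inE eqxx.
Qed.

End EdgesThroughCenter.

Section Star.
Variables (V : finType) (S : {set V}) (c : V).

Definition star : subgraph V := (c |: S, [set [set s; c] | s in S]).

Lemma star_edge_center u w : hrel star u w -> (u == c) || (w == c).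
Proof.
case/imsetP=> s _ uw_sc; have : c \in [set u; w] by rewrite uw_sc !inE eqxx orbT.
by rewrite !inE ![_ == c]eq_sym.
Qed.

Lemma star_spoke s : s \in S -> hrel star s c /\ hrel star c s.
Proof. by move=> sS; split; last rewrite /hrel setUC; apply/imsetP; exists s. Qed.

Lemma star_acyclic : acyclic star.
Proof.
move=> p p3 up; apply/negP => /(cycle_center_small star_edge_center up).
by rewrite leqNgt p3.
Qed.

Hypothesis cNS : c \notin S.

Lemma neq_center s : s \in S -> s != c.
Proof. by apply: contraTneq => ->. Qed.

Lemma star_connected : connected star.
Proof.
move=> x y; rewrite !inE => /orP[/eqP->|xS] /orP[/eqP->|yS].
- by exists [:: c], [::]; rewrite !inE eqxx.
- exists [:: c; y], [:: y]; split; rewrite //= ?inE ?eqxx ?andbT //.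
    exact: (star_spoke yS).2.
  by rewrite eq_sym neq_center.
- exists [:: x; c], [:: c]; split; rewrite //= ?inE ?xS ?orbT ?andbT //.
    exact: (star_spoke xS).1.
  by rewrite neq_center.
- have [<-|xy] := eqVneq x y; first by exists [:: x], [::]; rewrite !inE xS orbT.
  exists [:: x; c; y], [:: c; y]; split; rewrite //= ?inE ?xS ?orbT //.
    by rewrite (star_spoke xS).1 (star_spoke yS).2.
  by rewrite (negbTE (neq_center xS)) (negbTE xy) eq_sym neq_center.
Qed.

Lemma star_degree_center : degree star c = #|S|.
Proof.
rewrite /degree; have -> : [set e in star.2 | c \in e] = star.2.
  by apply/setP => e; rewrite inE andb_idr // => /imsetP[s _ ->]; rewrite !inE eqxx orbT.
apply: card_in_imset => s s' sS s'S ss'.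
have : s \in [set s'; c] by rewrite -ss' !inE eqxx.
by rewrite !inE (negbTE (neq_center sS)) orbF => /eqP.
Qed.

Variable adj : rel V.
Hypothesis S_adj_c : forall s, s \in S -> adj s c.

Lemma star_edges_ok : edges_ok adj star.
Proof.
move=> e /imsetP[s sS ->]; exists s, c.
by rewrite !inE eqxx sS orbT neq_center // S_adj_c.
Qed.

Lemma star_steiner_tree : 1 < #|S| -> steiner_tree adj S star.
Proof.
move=> S2; split; [split | exact: subsetUr | move=> v [vstar deg1]].
- exact: star_edges_ok.
- exact: star_connected.
- exact: star_acyclic.
move: vstar; rewrite !inE => /orP[/eqP vc|//].
by move: S2; rewrite -star_degree_center -vc deg1.
Qed.

End Star.

Section CompletelyIndependentSteinerTrees.
Variables (V : finType) (adj : rel V) (S : {set V}).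
Hypothesis S2 : 1 < #|S|.

Lemma stars_compl_indep k (g : 'I_k -> V) :
  injective g -> (forall i, g i \notin S) -> (forall i s, s \in S -> adj s (g i)) ->
  compl_indep adj S (fun i => star S (g i)).
Proof.
move=> g_inj gNS g_adj; split=> [i | p q pq]; first exact: star_steiner_tree (g_adj i) S2.
have gpq : g p != g q by apply: contraTneq pq => /g_inj ->; rewrite ltnn.
split.
- apply/pred0P => e /=; apply/negbTE/andP => -[/imsetP[s sS ->] /imsetP[s' s'S ss']].
  have : g p \in [set s'; g q] by rewrite -ss' !inE eqxx orbT.
  by rewrite !inE (negbTE gpq) orbF => /eqP gps'; move: (gNS p); rewrite gps' s'S.
- apply/setP => v; rewrite !inE; case: (boolP (v \in S)) => vS; rewrite ?orbT ?orbF //=.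
  by apply: contraNF gpq => /andP[/eqP <- /eqP <-].
- move=> x1 x2 P Q _ _ [s [-> _ ps sx2 us]] [t [-> _ qt tx2 ut]].
  rewrite -{1}sx2 -tx2; apply/pred0P => v /=; apply/negbTE/andP => -[vP vQ].
  have vgp := path_center_internal (@star_edge_center _ S (g p)) ps us vP.
  have vgq := path_center_internal (@star_edge_center _ S (g q)) qt ut vQ.
  by rewrite -vgp -vgq eqxx in gpq.
Qed.

Lemma steiner_tree_edge H : steiner_tree adj S H -> exists e, e \in H.2.
Proof.
case=> [[_ H_conn _] SH _]; have [s1 [s2 [s1S s2S s12]]] := card_gt1P S2.
have [_ [[|v s] [_ _ /= p12 l12 _]]] := H_conn s1 s2 (subsetP SH _ s1S) (subsetP SH _ s2S).
  by rewrite -l12 eqxx in s12.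
by case/andP: p12 => s1v _; exists [set s1; v].
Qed.

Lemma steiner_tree_meets_setC (A : {set V}) H :
  {in A &, forall x y, ~~ adj x y} -> steiner_tree adj S H ->
  exists2 v, v \in H.1 & v \notin A.
Proof.
move=> A_indep HS; have [e eH] := steiner_tree_edge HS.
case: HS => [[H_ok _ _] _ _]; have [x [y [xH yH _ xy _]]] := H_ok e eH.
have [xA | xNA] := boolP (x \in A); last by exists x.
exists y => //; apply: contraTN xy => yA; exact: A_indep.
Qed.

Lemma compl_indep_leq_card_setC (A : {set V}) k (T : 'I_k -> subgraph V) :
  S \subset A -> {in A &, forall x y, ~~ adj x y} -> compl_indep adj S T ->
  k <= #|~: A|.
Proof.
move=> SA A_indep [T_tree T_indep].
have /fin_all_exists[f fT] i : exists v, (v \in (T i).1) && (v \notin A).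
  by have [v vT vNA] := steiner_tree_meets_setC A_indep (T_tree i); exists v; rewrite vT.
have f_neq (i j : 'I_k) : i < j -> f i != f j.
  move=> ij; have [_ TiTj _] := T_indep i j ij; apply/eqP => fij.
  have /andP[fiT fiNA] := fT i; have /andP[fjT _] := fT j.
  have : f i \in S by rewrite -TiTj inE fiT fij fjT.
  by move/(subsetP SA); rewrite (negbTE fiNA).
have f_inj : injective f.
  move=> i j fij; case: (ltngtP i j) => [ij | ji | /val_inj //].
    by have := f_neq i j ij; rewrite fij eqxx.
  by have := f_neq j i ji; rewrite fij eqxx.
rewrite -[k in k <= _](card_ord k) -cardsT -(card_imset _ f_inj).
apply/subset_leq_card/subsetP => _ /imsetP[i _ ->].
by rewrite inE; case/andP: (fT i).
Qed.

Lemma kappa_star_eq_card_setC (A : {set V}) :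
  S \subset A -> {in A &, forall x y, ~~ adj x y} ->
  {in A & ~: A, forall x y, adj x y} -> kappa_star_eq adj S #|~: A|.
Proof.
move=> SA A_indep A_adj; split=> [|k T]; last exact: compl_indep_leq_card_setC.
exists (fun i => star S (enum_val i)); apply: stars_compl_indep => [|i|i s sS].
- exact: enum_val_inj.
- by apply: contraL (enum_valP i); rewrite inE negbK; apply: (subsetP SA).
- exact: A_adj (subsetP SA _ sS) (enum_valP i).
Qed.

End CompletelyIndependentSteinerTrees.

Section CompleteBipartite.
Variables m1 m2 : nat.

Lemma setC_Xpart : ~: Xpart m1 m2 = Ypart m1 m2.
Proof. by apply/setP => -[x|y]; rewrite !inE. Qed.

Lemma setC_Ypart : ~: Ypart m1 m2 = Xpart m1 m2.
Proof. by rewrite -setC_Xpart setCK. Qed.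

Lemma card_Xpart : #|Xpart m1 m2| = m1.
Proof.
have -> : Xpart m1 m2 = inl @: [set: 'I_m1].
  by apply/setP => -[x|y]; rewrite inE; apply/esym; [apply: imset_f | apply/imsetP => -[]].
by rewrite card_imset ?cardsT ?card_ord //; exact: inl_inj.
Qed.

Lemma card_Ypart : #|Ypart m1 m2| = m2.
Proof.
have -> : Ypart m1 m2 = inr @: [set: 'I_m2].
  by apply/setP => -[x|y]; rewrite inE; apply/esym; [apply/imsetP => -[] | apply: imset_f].
by rewrite card_imset ?cardsT ?card_ord //; exact: inr_inj.
Qed.

Lemma Kadj_Xpart : {in Xpart m1 m2 &, forall x y, ~~ Kadj m1 m2 x y}.
Proof. by move=> [x|x] [y|y]; rewrite !inE. Qed.

Lemma Kadj_Ypart : {in Ypart m1 m2 &, forall x y, ~~ Kadj m1 m2 x y}.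
Proof. by move=> [x|x] [y|y]; rewrite !inE. Qed.

Lemma Kadj_Xpart_setC : {in Xpart m1 m2 & ~: Xpart m1 m2, forall x y, Kadj m1 m2 x y}.
Proof. by move=> [x|x] [y|y]; rewrite !inE. Qed.

Lemma Kadj_Ypart_setC : {in Ypart m1 m2 & ~: Ypart m1 m2, forall x y, Kadj m1 m2 x y}.
Proof. by move=> [x|x] [y|y]; rewrite !inE. Qed.

End CompleteBipartite.

Theorem theorem3p1 (m1 m2 : nat) (S : {set ('I_m1 + 'I_m2)%type}) :
  2 <= m1 -> m1 <= m2 -> 2 <= #|S| ->
  (S \subset Xpart m1 m2 -> kappa_star_eq (Kadj m1 m2) S m2) /\
  (S \subset Ypart m1 m2 -> kappa_star_eq (Kadj m1 m2) S m1).
Proof.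
move=> _ _ S2; split=> SA.
- have := kappa_star_eq_card_setC S2 SA (@Kadj_Xpart _ _) (@Kadj_Xpart_setC _ _).
  by rewrite setC_Xpart card_Ypart.
- have := kappa_star_eq_card_setC S2 SA (@Kadj_Ypart _ _) (@Kadj_Ypart_setC _ _).
  by rewrite setC_Ypart card_Xpart.
Qed.
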